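(* Let $\Bbbk$ be a field, $R=\Bbbk[x_1,\dots,x_m]$ with the standard $\mathbb Z^m$-grading, and let $\mathcal F_\bullet$ be a $\mathbb Z^m$-graded minimal free resolution of a finitely generated $\mathbb Z^m$-graded $R$-module $M$, with differentials $f_n$ and $f_0\colon F_0\to M$ the augmentation. Let $B=\coprod_n B_n$ be a basis of $\mathcal F_\bullet$ consisting of homogeneous elements. Let $\overline{\mathcal F}_\bullet=\mathcal F_\bullet\otimes_R R/(x_1-1,\dots,x_m-1)$ (a complex of $\Bbbk$-vector spaces with differentials $\bar f_n$, and $\bar f_0\colon\overline F_0\to H_0(\overline{\mathcal F}_\bullet)$ the canonical projection), and let $\overline B$ be the basis of $\overline{\mathcal F}_\bullet$ induced by $B$. Then: (a) for each $n\ge1$ and each $\bar b\in\overline B_n$ one has $\bar f_n(\bar b)\ne0$; (b) if $\overline B$ is a basis with minimal support for $\overline{\mathcal F}_\bullet$, then $B$ is a basis with minimal support for $\mathcal F_\bullet$; (c) if $B$ is a basis with minimal support for $\mathcal F_\bullet$ and $M$ is torsion-free, then $\overline B$ is a basis with minimal support for $\overline{\mathcal F}_\bullet$.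
   Context: Let $\mathcal F_\bullet: 0\leftarrow F_0\leftarrow F_1\leftarrow\cdots\leftarrow F_l\leftarrow0$ be a complex of free modules of finite rank over a ring, with differentials $f_n\colon F_n\to F_{n-1}$, and let $f_0\colon F_0\to H_0(\mathcal F_\bullet)$ be the canonical projection. Let $B_n$ be a basis of $F_n$ and $B=\coprod B_n$. For $y=\sum_{c\in B_n}a_cc\in F_n$, its support is $\operatorname{supp}y=\{c\in B_n: a_c\neq0\}$. An element $y\in F_n$ is a cycle with minimal support (relative to $B$) if $y\in\operatorname{Ker}f_n$ and $\operatorname{supp}y$ does not properly contain the support of any nonzero element of $\operatorname{Ker}f_n$. For $y\in F_n$, $n\ge1$, the boundary support of $y$ is $\operatorname{supp}f_n(y)$. $B$ is a basis with minimal support for $\mathcal F_\bullet$ if for every $n\ge1$ and every $b\in B_n$, $f_n(b)$ is a cycle with minimal support. A $\mathbb Z^m$-graded free resolution is minimal if its differentials are homogeneous of degree $0$ and $f_n(F_n)\subseteq\mathfrak m F_{n-1}$ for $n\ge1$, where $\mathfrak m=(x_1,\dots,x_m)$. *)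

From HB Require Import structures.
From mathcomp Require Import all_boot all_order all_algebra.
Set Implicit Arguments. Unset Strict Implicit. Unset Printing Implicit Defensive.
Import Order.TTheory GRing.Theory Num.Theory.
Local Open Scope ring_scope.

Fixpoint mpoly (k : fieldType) (m : nat) : idomainType :=
  if m is m'.+1 then {poly mpoly k m'} else k.

(* the variable x_i (i < m); for m' = m-1 the outermost 'X is x_{m-1} *)
Fixpoint mvar (k : fieldType) (m : nat) : nat -> mpoly k m :=
  match m return nat -> mpoly k m with
  | 0 => fun _ => 0
  | m'.+1 => fun i => if i == m' then 'X else (mvar k m' i)%:P
  end.

Fixpoint mconst (k : fieldType) (m : nat) (c : k) : mpoly k m :=
  match m return mpoly k m with
  | 0 => c
  | m'.+1 => (mconst m' c)%:P
  end.

(* evaluation at x_1 = ... = x_m = 1, i.e. the canonical map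
   R -> R/(x_1 - 1, ..., x_m - 1) = k *)
Fixpoint mev (k : fieldType) (m : nat) : mpoly k m -> k :=
  match m return mpoly k m -> k with
  | 0 => fun p => p
  | m'.+1 => fun p => mev p.[1]
  end.

Definition mono (k : fieldType) (m : nat) (e : 'I_m -> nat) : mpoly k m :=
  \prod_(i < m) mvar k m i ^+ e i.

(* p is homogeneous of degree a in Z^m : p lies in the graded piece R_a,
   which is k * x^a if a is in N^m and 0 otherwise *)
Definition mhomog (k : fieldType) (m : nat) (p : mpoly k m) (a : 'I_m -> int) : Prop :=
  p = 0 \/
  exists e : 'I_m -> nat, (forall i, (e i)%:Z = a i) /\ exists c : k, p = mconst m c * mono k e.

Definition in_maxideal (k : fieldType) (m : nat) (p : mpoly k m) : Prop :=
  exists g : 'I_m -> mpoly k m, p = \sum_(i < m) g i * mvar k m i.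

(* F_n = A^(r n) (row vectors), basis B_n = standard basis,
   D n : 'M_(r n.+1, r n) is the matrix of f_{n+1} : F_{n+1} -> F_n,
   i.e. f_{n+1}(y) = y *m D n; the basis element b_j of F_{n+1} maps to row j (D n).
   f_0 : F_0 -> H_0 is the canonical projection, with kernel Im f_1. *)

Definition is_complex (A : pzRingType) (r : nat -> nat)
  (D : forall n, 'M[A]_(r n.+1, r n)) : Prop :=
  forall n, D n.+1 *m D n = 0.

Definition exact_pos (A : pzRingType) (r : nat -> nat)
  (D : forall n, 'M[A]_(r n.+1, r n)) : Prop :=
  forall n (y : 'rV[A]_(r n.+1)), y *m D n = 0 -> exists z : 'rV[A]_(r n.+2), y = z *m D n.+1.

Definition in_ker (A : pzRingType) (r : nat -> nat)
  (D : forall n, 'M[A]_(r n.+1, r n)) (n : nat) : 'rV[A]_(r n) -> Prop :=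
  match n as n0 return 'rV[A]_(r n0) -> Prop with
  | 0 => fun y => exists z : 'rV[A]_(r 1), y = z *m D 0
  | k.+1 => fun y => y *m D k = 0
  end.

Definition supp (A : pzRingType) (N : nat) (y : 'rV[A]_N) : {set 'I_N} :=
  [set j | y 0 j != 0].

Definition min_support_cycle (A : pzRingType) (r : nat -> nat)
  (D : forall n, 'M[A]_(r n.+1, r n)) (n : nat) (y : 'rV[A]_(r n)) : Prop :=
  in_ker D y /\
  forall z : 'rV[A]_(r n), in_ker D z -> z != 0 -> ~ (supp z \proper supp y).

Definition min_support_basis (A : pzRingType) (r : nat -> nat)
  (D : forall n, 'M[A]_(r n.+1, r n)) : Prop :=
  forall n (j : 'I_(r n.+1)), min_support_cycle D (row j (D n)).

(* ---------- Z^m-graded structure: the basis element j of F_n has degree deg n j;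
   differentials homogeneous of degree 0 means the entry (j,i) of D n is homogeneous
   of degree deg (n+1) j - deg n i *)
Definition graded_cx (k : fieldType) (m : nat) (r : nat -> nat)
  (D : forall n, 'M[mpoly k m]_(r n.+1, r n)) (deg : forall n, 'I_(r n) -> 'I_m -> int) : Prop :=
  forall n (j : 'I_(r n.+1)) (i : 'I_(r n)),
    mhomog (D n j i) (fun t => deg n.+1 j t - deg n i t).

Definition minimal_cx (k : fieldType) (m : nat) (r : nat -> nat)
  (D : forall n, 'M[mpoly k m]_(r n.+1, r n)) : Prop :=
  forall n (j : 'I_(r n.+1)) (i : 'I_(r n)), in_maxideal (D n j i).

(* M = H_0(F) = F_0 / Im f_1 is torsion-free *)
Definition coker_torsion_free (A : idomainType) (r : nat -> nat)
  (D : forall n, 'M[A]_(r n.+1, r n)) : Prop :=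
  forall (a : A) (v : 'rV[A]_(r 0)), a != 0 ->
    (exists z : 'rV[A]_(r 1), a *: v = z *m D 0) -> exists z : 'rV[A]_(r 1), v = z *m D 0.

Definition bar_cx (k : fieldType) (m : nat) (r : nat -> nat)
  (D : forall n, 'M[mpoly k m]_(r n.+1, r n)) : forall n, 'M[k]_(r n.+1, r n) :=
  fun n => map_mx (@mev k m) (D n).

From HB Require Import structures.
From mathcomp Require Import all_boot all_order all_algebra.
From mathcomp Require Import zify.
Set Implicit Arguments. Unset Strict Implicit. Unset Printing Implicit Defensive.
Import Order.TTheory GRing.Theory Num.Theory.
Local Open Scope ring_scope.

(* Every entry of a graded differential is a scalar multiple of a monomial, so reducing
   at x = 1 does not change the support of a row of a differential.  A nonzero cycle z
   of F has a nonzero homogeneous component, which is again a cycle, and its reduction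
   is a nonzero cycle of the reduced complex supported inside supp z.  Conversely a
   cycle c of the reduced complex lifts to the homogeneous cycle
   sum_j c_j x^(a - deg e_j) e_j for any degree a dominating all basis degrees, with the
   same support.  So minimal supports correspond in both directions.  For (a), a row of D_n reducing to 0
   would itself be 0, making a basis vector of F_(n+1) a cycle, hence a boundary, which
   minimality forbids: boundaries vanish at x = 0. *)

Section Evaluation.
Variable k : fieldType.

Fixpoint meval (c : k) (m : nat) : mpoly k m -> k :=
  match m return mpoly k m -> k with
  | 0 => id
  | m'.+1 => fun p => meval c p.[mconst m' c]
  end.

Fact meval_is_nmod_morphism c m : nmod_morphism (@meval c m).
Proof. by elim: m => [//|m IH]; split=> [|p q] /=; rewrite ?horner0 ?hornerD IH. Qed.
HB.instance Definition _ c m :=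
  GRing.isNmodMorphism.Build _ _ (@meval c m) (meval_is_nmod_morphism c m).

Fact meval_is_monoid_morphism c m : monoid_morphism (@meval c m).
Proof. by elim: m => [//|m IH]; split=> [|p q] /=; rewrite ?hornerC ?hornerM IH. Qed.
HB.instance Definition _ c m :=
  GRing.isMonoidMorphism.Build _ _ (@meval c m) (meval_is_monoid_morphism c m).

Fact mconst_is_nmod_morphism m : nmod_morphism (mconst m : k -> mpoly k m).
Proof. by elim: m => [//|m IH]; split=> [|a b] /=; rewrite ?IH ?polyCD. Qed.
HB.instance Definition _ m :=
  GRing.isNmodMorphism.Build _ _ (mconst m : k -> _) (mconst_is_nmod_morphism m).

Fact mconst_is_monoid_morphism m : monoid_morphism (mconst m : k -> mpoly k m).
Proof. by elim: m => [//|m IH]; split=> [|a b] /=; rewrite ?IH ?polyCM. Qed.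
HB.instance Definition _ m :=
  GRing.isMonoidMorphism.Build _ _ (mconst m : k -> _) (mconst_is_monoid_morphism m).

Lemma meval_mconst c m d : meval c (mconst m d) = d.
Proof. by elim: m => [//|m IH] /=; rewrite hornerC IH. Qed.

Lemma meval_mvar c m i : (i < m)%N -> meval c (mvar k m i) = c.
Proof.
elim: m i => [//|m IH] i /= lt_im.
case: eqP => [_|ne_im]; first by rewrite hornerX meval_mconst.
by rewrite hornerC IH //; lia.
Qed.

Lemma mev_meval1 m (p : mpoly k m) : mev p = meval 1 p.
Proof. by elim: m p => [//|m IH] p /=; rewrite IH rmorph1. Qed.

Fact mev_is_nmod_morphism m : nmod_morphism (@mev k m).
Proof. by split=> [|p q]; rewrite !mev_meval1 (raddf0, raddfD). Qed.
HB.instance Definition _ m :=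
  GRing.isNmodMorphism.Build _ _ (@mev k m) (mev_is_nmod_morphism m).

Fact mev_is_monoid_morphism m : monoid_morphism (@mev k m).
Proof. by split=> [|p q]; rewrite !mev_meval1 (rmorph1, rmorphM). Qed.
HB.instance Definition _ m :=
  GRing.isMonoidMorphism.Build _ _ (@mev k m) (mev_is_monoid_morphism m).

Lemma mev_mconst m (c : k) : mev (mconst m c) = c.
Proof. by rewrite mev_meval1 meval_mconst. Qed.

Lemma mev_mono m (e : 'I_m -> nat) : mev (mono k e) = 1.
Proof.
rewrite /mono rmorph_prod big1 // => i _.
by rewrite rmorphXn /= mev_meval1 meval_mvar ?expr1n.
Qed.

Lemma mev_mconstM_mono m c (e : 'I_m -> nat) : mev (mconst m c * mono k e) = c.
Proof. by rewrite rmorphM /= mev_mconst mev_mono mulr1. Qed.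

Lemma meval0_maxideal m (p : mpoly k m) : in_maxideal p -> meval 0 p = 0.
Proof.
by case=> g ->; rewrite rmorph_sum big1 // => i _; rewrite rmorphM /= meval_mvar ?mulr0.
Qed.

End Evaluation.

Section Coefficients.
Variable k : fieldType.

Fixpoint mcoef (m : nat) : ('I_m -> nat) -> mpoly k m -> k :=
  match m return ('I_m -> nat) -> mpoly k m -> k with
  | 0 => fun _ p => p
  | m'.+1 => fun E p => mcoef (fun i => E (widen_ord (leqnSn m') i)) p`_(E ord_max)
  end.

Fact mcoef_is_nmod_morphism m (E : 'I_m -> nat) : nmod_morphism (mcoef E).
Proof. by elim: m E => [//|m IH] E; split=> [|p q] /=; rewrite ?coef0 ?coefD IH. Qed.
HB.instance Definition _ m E :=
  GRing.isNmodMorphism.Build _ _ (@mcoef m E) (mcoef_is_nmod_morphism E).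

Lemma eq_mcoef m (E1 E2 : 'I_m -> nat) : E1 =1 E2 -> mcoef E1 =1 mcoef E2.
Proof.
elim: m E1 E2 => [//|m IH] E1 E2 eqE p /=.
by rewrite eqE; apply: IH => i; apply: eqE.
Qed.

Lemma eq_mono m (e1 e2 : 'I_m -> nat) : e1 =1 e2 -> mono k e1 = mono k e2.
Proof. by move=> eqe; apply: eq_bigr => i _; rewrite eqe. Qed.

Lemma monoD m (e1 e2 : 'I_m -> nat) :
  mono k (fun i => e1 i + e2 i)%N = mono k e1 * mono k e2.
Proof. by rewrite /mono -big_split; apply: eq_bigr => i _; rewrite exprD. Qed.

Lemma mono_recr m (e : 'I_m.+1 -> nat) :
  mono k e = (mono k (fun i : 'I_m => e (widen_ord (leqnSn m) i)))%:P * 'X^(e ord_max).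
Proof.
rewrite /mono big_ord_recr /= eqxx rmorph_prod; congr (_ * _).
apply: eq_bigr => i _; rewrite rmorphXn /=.
by rewrite (_ : _ == m = false) // ltn_eqF.
Qed.

Lemma forall_ord_recr m (P : 'I_m.+1 -> bool) :
  [forall i, P i] = P ord_max && [forall i : 'I_m, P (widen_ord (leqnSn m) i)].
Proof.
apply/forallP/andP => [H|[Pmax /forallP Pw] i]; first by split=> //; apply/forallP.
have [j ->|->] := unliftP ord_max i; last by [].
rewrite (_ : lift _ _ = widen_ord (leqnSn m) j) //.
by apply: val_inj; rewrite /= /bump leqNgt ltn_ord.
Qed.

Lemma mcoefM_term m (E e : 'I_m -> nat) (p : mpoly k m) d :
  mcoef E (p * (mconst m d * mono k e)) =
  if [forall i, e i <= E i]%N then mcoef (fun i => E i - e i)%N p * d else 0.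
Proof.
elim: m E e p d => [|m IH] E e p d /=.
  by rewrite /mono big_ord0 mulr1; case: forallP => // -[] [].
rewrite mono_recr forall_ord_recr [_%:P * (_ * _)]mulrA -polyCM mulrA coefMXn ltnNge.
by case: leqP => _ //=; rewrite ?raddf0 // (coefMC (R := mpoly k m)) IH.
Qed.

Lemma mcoef_neq0 m (p : mpoly k m) : p != 0 -> exists E, mcoef E p != 0.
Proof.
elim: m p => [|m IH] p /= p_neq0; first by exists (fun _ => 0%N).
have /IH [E mcoefE] : p`_(size p).-1 != 0 by rewrite -lead_coefE lead_coef_eq0.
exists (fun i : 'I_m.+1 => if insub (val i) is Some j then E j else (size p).-1).
rewrite /= insubN ?ltnn // (eq_mcoef (E2 := E)) // => i.
by case: insubP => [j _ /val_inj -> //|]; rewrite /= ltn_ord.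
Qed.

End Coefficients.

Section GradedPieces.
Variables (k : fieldType) (m : nat).
Implicit Types (b d : 'I_m -> int) (p y : mpoly k m).

Definition nonneg_deg b := [forall t, 0 <= b t].

(* [mterm b c] is [c x^b], the element of the graded piece [R_b] with value [c] at
   [x = 1]; [R_b = 0] unless [b] lies in [N^m]. *)
Definition mterm b (c : k) : mpoly k m :=
  if nonneg_deg b then mconst m c * mono k (fun t => `|b t|%N) else 0.

Fact mterm_is_nmod_morphism b : nmod_morphism (mterm b).
Proof.
by split=> [|c1 c2]; rewrite /mterm; case: ifP; rewrite ?raddf0 ?mul0r ?raddfD ?mulrDl ?addr0.
Qed.
HB.instance Definition _ b :=
  GRing.isNmodMorphism.Build _ _ (mterm b) (mterm_is_nmod_morphism b).

Lemma eq_mterm b1 b2 : b1 =1 b2 -> mterm b1 =1 mterm b2.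
Proof.
move=> eqb c; rewrite /mterm (_ : nonneg_deg b1 = nonneg_deg b2); last first.
  by apply: eq_forallb => t; rewrite eqb.
by case: ifP => // _; congr (_ * _); apply: eq_mono => t; rewrite eqb.
Qed.

Lemma mev_mterm b c : mev (mterm b c) = if nonneg_deg b then c else 0.
Proof. by rewrite /mterm; case: ifP; rewrite ?raddf0 // mev_mconstM_mono. Qed.

Definition scaled_mono y := exists e, y = mconst m (mev y) * mono k e.

Lemma scaled_mono_eq0 y : scaled_mono y -> (y == 0) = (mev y == 0).
Proof.
case=> e y_eq; apply/eqP/eqP => [->|mev0]; first exact: raddf0.
by rewrite y_eq mev0 raddf0 mul0r.
Qed.

Lemma mterm_scaled_mono b c : scaled_mono (mterm b c).
Proof.
exists (fun t => `|b t|%N); rewrite mev_mterm /mterm.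
by case: ifP => _ //; rewrite raddf0 mul0r.
Qed.

Lemma mhomog_scaled_mono y d : mhomog y d -> scaled_mono y.
Proof.
case=> [->|[e [_ [c ->]]]]; first by exists (fun _ => 0%N); rewrite !raddf0 mul0r.
by exists e; rewrite mev_mconstM_mono.
Qed.

Lemma mtermM_homog b d c y : nonneg_deg b -> mhomog y d ->
  mterm b c * y = mterm (fun t => b t + d t) (c * mev y).
Proof.
move=> b_ge0 [->|[e [e_eq [c' ->]]]]; first by rewrite !(mulr0, raddf0).
have bd_ge0 : nonneg_deg (fun t => b t + d t).
  by apply/forallP => t; move/forallP: b_ge0 => /(_ t); rewrite -e_eq; lia.
rewrite /mterm bd_ge0 b_ge0 mev_mconstM_mono.
rewrite rmorphM mulrACA -monoD; congr (_ * _); apply: eq_mono => t.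
by move/forallP: b_ge0 => /(_ t); rewrite -e_eq; lia.
Qed.

Definition hcomp b p := mterm b (mcoef (fun t => `|b t|%N) p).

Fact hcomp_is_nmod_morphism b : nmod_morphism (hcomp b).
Proof. by split=> [|p q]; rewrite /hcomp ?raddf0 // !raddfD. Qed.
HB.instance Definition _ b :=
  GRing.isNmodMorphism.Build _ _ (hcomp b) (hcomp_is_nmod_morphism b).

Lemma hcompM_homog b d p y :
  mhomog y d -> hcomp b (p * y) = hcomp (fun t => b t - d t) p * y.
Proof.
move=> y_homog; case: (y_homog) => [->|[e [e_eq [c y_eq]]]]; first by rewrite !mulr0 raddf0.
have [/forallP bd_ge0 | bd_ge0] := boolP (nonneg_deg (fun t => b t - d t)).
  have b_ge0 : nonneg_deg b by apply/forallP => t; move: (bd_ge0 t); rewrite -e_eq; lia.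
  rewrite {2}/hcomp (mtermM_homog _ _ y_homog); last exact/forallP.
  rewrite (eq_mterm (b2 := b)) => [|t]; last lia.
  rewrite /hcomp y_eq mcoefM_term (introT forallP) => [|t]; last first.
    by move: (bd_ge0 t); rewrite -e_eq; lia.
  rewrite mev_mconstM_mono (eq_mcoef (E2 := fun t => `|b t - d t|%N)) // => t.
  by move: (bd_ge0 t); rewrite -e_eq; lia.
rewrite {2}/hcomp /mterm (negbTE bd_ge0) mul0r /hcomp y_eq mcoefM_term.
case: ifP => [/forallP e_le|_]; last by rewrite raddf0.
rewrite /mterm; case: ifP => [/forallP b_ge0|_] //; case/forallP: bd_ge0 => t.
by move: (b_ge0 t) (e_le t); rewrite -e_eq; lia.
Qed.

End GradedPieces.

Section GradedRows.
Variables (k : fieldType) (m : nat).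
Local Notation R := (mpoly k m).
Local Notation mevR := (@mev k m).

Definition graded_mx p q (dr : 'I_p -> 'I_m -> int) (dc : 'I_q -> 'I_m -> int)
    (M : 'M[R]_(p, q)) :=
  forall j l, mhomog (M j l) (fun t => dr j t - dc l t).

(* For the free module with basis of degrees [d], the component of degree [a]. *)
Definition hcomp_row p (a : 'I_m -> int) (d : 'I_p -> 'I_m -> int) (v : 'rV[R]_p) :=
  \row_j hcomp (fun t => a t - d j t) (v 0 j).

(* The homogeneous element of degree [a] whose value at [x = 1] is [c], provided
   [a] dominates every [d j]. *)
Definition lift_row p (a : 'I_m -> int) (d : 'I_p -> 'I_m -> int) (c : 'rV[k]_p) : 'rV[R]_p :=
  \row_j mterm (fun t => a t - d j t) (c 0 j).

Lemma hcomp_rowM p q a dr dc (M : 'M[R]_(p, q)) v :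
  graded_mx dr dc M -> hcomp_row a dc (v *m M) = hcomp_row a dr v *m M.
Proof.
move=> M_graded; apply/rowP => l; rewrite !mxE raddf_sum; apply: eq_bigr => j _.
rewrite !mxE /= (hcompM_homog _ _ (M_graded j l)); congr (_ * _).
rewrite /hcomp (eq_mterm (b2 := fun t => a t - dr j t)) => [|t]; last lia.
by rewrite (eq_mcoef (E2 := fun t => `|a t - dr j t|%N)) // => t; lia.
Qed.

Lemma hcomp_row0 p a d : hcomp_row a d (0 : 'rV[R]_p) = 0.
Proof. by apply/rowP => j; rewrite !mxE raddf0. Qed.

Lemma lift_rowM p q a dr dc (M : 'M[R]_(p, q)) c :
  (forall j t, dr j t <= a t) -> graded_mx dr dc M ->
  lift_row a dr c *m M = lift_row a dc (c *m map_mx mevR M).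
Proof.
move=> dr_le M_graded; apply/rowP => l; rewrite !mxE raddf_sum; apply: eq_bigr => j _.
rewrite !mxE /= (mtermM_homog _ _ (M_graded j l)); last first.
  by apply/forallP => t; move: (dr_le j t); lia.
by apply: eq_mterm => t; lia.
Qed.

Lemma lift_row0 p a d : lift_row a d (0 : 'rV[k]_p) = 0.
Proof. by apply/rowP => j; rewrite !mxE raddf0. Qed.

Lemma map_lift_row p a d (c : 'rV[k]_p) :
  (forall j t, d j t <= a t) -> map_mx mevR (lift_row a d c) = c.
Proof.
move=> d_le; apply/rowP => j; rewrite !mxE mev_mterm.
by rewrite (_ : nonneg_deg _) //; apply/forallP => t; move: (d_le j t); lia.
Qed.

Lemma supp_map_mev p (v : 'rV[R]_p) :
  (forall j, scaled_mono (v 0 j)) -> supp (map_mx mevR v) = supp v.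
Proof. by move=> v_mono; apply/setP => j; rewrite !inE mxE (scaled_mono_eq0 (v_mono j)). Qed.

Lemma hcomp_row_scaled_mono p a d (v : 'rV[R]_p) j : scaled_mono (hcomp_row a d v 0 j).
Proof. by rewrite mxE; apply: mterm_scaled_mono. Qed.

Lemma lift_row_scaled_mono p a d (c : 'rV[k]_p) j : scaled_mono (lift_row a d c 0 j).
Proof. by rewrite mxE; apply: mterm_scaled_mono. Qed.

End GradedRows.

Lemma supp_eq0 (A : pzRingType) N (v : 'rV[A]_N) : (supp v == set0) = (v == 0).
Proof.
apply/eqP/eqP => [/setP v_supp|->]; last by apply/setP => j; rewrite !inE mxE eqxx.
by apply/rowP => j; move: (v_supp j); rewrite !inE mxE => /negbFE/eqP.
Qed.

Lemma row_in_ker (A : pzRingType) (r : nat -> nat) (D : forall n, 'M[A]_(r n.+1, r n)) n j :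
  is_complex D -> in_ker D (row j (D n)).
Proof.
case: n j => [|n] j D_cx /=; first by exists (delta_mx 0 j); rewrite rowE.
by rewrite -row_mul D_cx row0.
Qed.

Section Reduction.
Variables (k : fieldType) (m : nat) (r : nat -> nat).
Variable D : forall n, 'M[mpoly k m]_(r n.+1, r n).

Lemma is_complex_bar : is_complex D -> is_complex (bar_cx D).
Proof. by move=> D_cx n; rewrite /bar_cx -map_mxM D_cx map_mx0. Qed.

Lemma in_ker_bar n (z : 'rV_(r n)) : in_ker D z -> in_ker (bar_cx D) (map_mx (@mev k m) z).
Proof.
case: n z => [|n] z /=; last by move=> z_ker; rewrite -map_mxM z_ker map_mx0.
by case=> w ->; exists (map_mx (@mev k m) w); rewrite map_mxM.
Qed.

Variable deg : forall n, 'I_(r n) -> 'I_m -> int.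
Hypothesis D_graded : graded_cx D deg.

Lemma in_ker_hcomp_row n a (z : 'rV_(r n)) :
  in_ker D z -> in_ker D (hcomp_row a (@deg n) z).
Proof.
case: n z => [|n] z /=.
  by case=> w ->; exists (hcomp_row a (@deg 1) w); rewrite (hcomp_rowM _ _ (@D_graded 0)).
by move=> z_ker; rewrite -(hcomp_rowM _ _ (@D_graded n)) z_ker hcomp_row0.
Qed.

Lemma in_ker_lift_row n a (c : 'rV_(r n)) :
  (forall i t, @deg n i t <= a t) -> (forall i t, @deg n.+1 i t <= a t) ->
  in_ker (bar_cx D) c -> in_ker D (lift_row a (@deg n) c).
Proof.
case: n c => [|n] c /= deg_le deg1_le.
  by case=> w ->; exists (lift_row a (@deg 1) w); rewrite (lift_rowM _ deg1_le (@D_graded 0)).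
by move=> c_ker; rewrite (lift_rowM _ deg_le (@D_graded n)) -/(bar_cx D n) c_ker lift_row0.
Qed.

Lemma supp_row_bar n j : supp (row j (bar_cx D n)) = supp (row j (D n)).
Proof.
by rewrite -map_row supp_map_mev // => i; rewrite mxE; apply: mhomog_scaled_mono (D_graded j i).
Qed.

Lemma bar_cycle_of_cycle n (z : 'rV_(r n)) : in_ker D z -> z != 0 ->
  exists2 c, in_ker (bar_cx D) c /\ c != 0 & supp c \subset supp z.
Proof.
move=> z_ker; rewrite -supp_eq0 => /set0Pn [j0]; rewrite inE => /mcoef_neq0 [E mcoefE].
pose a t := (E t)%:Z + @deg n j0 t.
pose w := hcomp_row a (@deg n) z.
exists (map_mx (@mev k m) w); first split.
- exact/in_ker_bar/in_ker_hcomp_row.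
- rewrite -supp_eq0; apply/set0Pn; exists j0; rewrite inE !mxE mev_mterm.
  rewrite (_ : nonneg_deg _); last by apply/forallP => t; rewrite /a; lia.
  by rewrite (eq_mcoef (E2 := E)) // => t; rewrite /a; lia.
- rewrite supp_map_mev; last exact: hcomp_row_scaled_mono.
  by apply/subsetP => j; rewrite !inE mxE; apply: contra => /eqP ->; rewrite raddf0.
Qed.

Lemma cycle_of_bar_cycle n (c : 'rV_(r n)) : in_ker (bar_cx D) c -> c != 0 ->
  exists2 z, in_ker D z & z != 0 /\ supp z = supp c.
Proof.
move=> c_ker c_neq0.
pose a t := Num.max (\big[Num.max/0]_i @deg n i t) (\big[Num.max/0]_i @deg n.+1 i t).
have deg_le i t : @deg n i t <= a t by rewrite le_max le_bigmax.
have deg1_le i t : @deg n.+1 i t <= a t by rewrite le_max le_bigmax orbT.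
have c_lift := map_lift_row c deg_le.
exists (lift_row a (@deg n) c); first exact: in_ker_lift_row.
split; first by apply: contraNneq c_neq0 => z0; rewrite -c_lift z0 map_mx0.
by rewrite -{2}c_lift supp_map_mev //; apply: lift_row_scaled_mono.
Qed.

Lemma row_bar_neq0 n j : exact_pos D -> minimal_cx D -> row j (bar_cx D n) != 0.
Proof.
move=> D_exact D_minimal; rewrite -supp_eq0 supp_row_bar supp_eq0.
apply/negP => /eqP row0.
have [w delta_eq] : exists w : 'rV_(r n.+2), delta_mx 0 j = w *m D n.+1.
  by apply: (D_exact n); rewrite -rowE.
have /(congr1 (@meval k 0 m)) := congr1 (fun v : 'rV_(r n.+1) => v 0 j) delta_eq.
rewrite !mxE !eqxx rmorph1 rmorph_sum big1 => [/eqP|i _]; first by rewrite oner_eq0.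
by rewrite rmorphM -[X in _ * X]/(meval 0 (D n.+1 i j)) meval0_maxideal ?mulr0.
Qed.

Hypothesis D_cx : is_complex D.

Lemma min_support_basis_of_bar : min_support_basis (bar_cx D) -> min_support_basis D.
Proof.
move=> bar_min n j; split; first exact: row_in_ker.
move=> z z_ker z_neq0 z_supp.
have [c [c_ker c_neq0] c_supp] := bar_cycle_of_cycle z_ker z_neq0.
apply: (bar_min n j).2 c_ker c_neq0 _.
by rewrite supp_row_bar (sub_proper_trans c_supp z_supp).
Qed.

Lemma min_support_basis_bar : min_support_basis D -> min_support_basis (bar_cx D).
Proof.
move=> D_min n j; split; first exact/row_in_ker/is_complex_bar.
move=> c c_ker c_neq0 c_supp.
have [z z_ker [z_neq0 z_supp]] := cycle_of_bar_cycle c_ker c_neq0.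
by apply: (D_min n j).2 z_ker z_neq0 _; rewrite z_supp -supp_row_bar.
Qed.

End Reduction.

Theorem mainTheorem4 (k : fieldType) (m : nat) (r : nat -> nat) (l : nat)
    (D : forall n, 'M[mpoly k m]_(r n.+1, r n))
    (deg : forall n, 'I_(r n) -> 'I_m -> int) :
  (forall n, (l < n)%N -> r n = 0%N) ->
  is_complex D -> exact_pos D -> graded_cx D deg -> minimal_cx D ->
  [/\ (forall n (j : 'I_(r n.+1)), row j (bar_cx D n) != 0),
      (min_support_basis (bar_cx D) -> min_support_basis D) &
      (min_support_basis D -> coker_torsion_free D -> min_support_basis (bar_cx D))].
Proof.
move=> _ D_cx D_exact D_graded D_minimal; split.
- by move=> n j; apply: (row_bar_neq0 D_graded).
- exact: (min_support_basis_of_bar D_graded).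
- by move=> D_min _; apply: (min_support_basis_bar D_graded).
Qed.
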